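(* Let $\mathbf{R}^{\mathrm{o}}$ be a finite set of obligations, $\mathbf{R}=(\emptyset,\mathbf{R}^{\mathrm{o}})$, fix a set $\Gamma$ of alethic formulas relative to which the overriding relation $\triangleright$ is computed, and let $M$ be a replete $\mathbf{R}$-ordered model. For every Boolean formula $a$ and world $w$ of $M$: if $w\in\max_{\succeq_I}(\Vert a\Vert)$, then $w\models a$ and $w\models\bigvee_{H\in\mathit{maxf}(\mathbf{R}^{\mathrm{o}}_{\triangleright},a,\{a\})}\bigl(\bigwedge\mathrm{m}(H)\bigr)$, with $out_4^{+}$ as the underlying I/O operation.
   Context: Boolean formulas over propositional letters; $\models_{\mathrm{PL}}$ classical entailment, $\models_{\mathrm{S5}}$ S5 entailment. An obligation is $\bigcirc(B/A)$ ($A,B$ Boolean) with body $b=A$, head $h=B$. Overriding: $r_j\triangleright r_i$ iff (i) $\{h(r_i),h(r_j)\}\cup\Gamma\models_{\mathrm{S5}}\bot$; (ii) $b(r_j)\models_{\mathrm{PL}}b(r_i)$ and $b(r_i)\not\models_{\mathrm{PL}}b(r_j)$; (iii) $\{h(r_i),b(r_j)\}\not\models_{\mathrm{PL}}\bot$. An $\mathbf{R}$-ordered model (no normality conditionals) is $(W,\succeq_N,\succeq_I,v)$ with $W\neq\emptyset$, valuation $v$, $\succeq_N=W\times W$, and $w_1\succeq_I w_2$ iff $V(w_1)\subseteq V(w_2)$, where $V(w)=\{r_i\in\mathbf{R}^{\mathrm{o}}:w\models b(r_i)\wedge\neg h(r_i)$ and $w\not\models b(r_j)$ for all $r_j\in\mathbf{R}^{\mathrm{o}}$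 with $r_j\triangleright r_i\}$. $\max_{\succeq_I}(X)=\{w\in X:\forall u\in X(u\succeq_I w\Rightarrow w\succeq_I u)\}$, $\Vert a\Vert$ the set of worlds where $a$ holds. Replete: every PL-consistent Boolean formula holds at some world. I/O: for a set $H$ of pairs of Boolean formulas, $\mathrm{m}(H)=\{a\rightarrow x:(a,x)\in H\}$ ($\bigwedge\mathrm{m}(\emptyset)=\top$), $out_4^{+}(H,a)=\{x:\{a\}\cup\mathrm{m}(H)\models_{\mathrm{PL}}x\}$; $\mathit{maxf}(N,a,C)$ is the set of $\subseteq$-maximal $H\subseteq N$ with $out_4^{+}(H,a)\cup C$ PL-consistent. Translation: for $r_i=\bigcirc(x/a)$, $D(r_i)=\{r_j\in\mathbf{R}^{\mathrm{o}}:r_j\triangleright r_i\}$, $r_i^{\triangleright}=(a\wedge\bigwedge_{r_j\in D(r_i)}\neg b(r_j),x)$ if $D(r_i)\neq\emptyset$, else $(a,x)$; $\mathbf{R}^{\mathrm{o}}_{\triangleright}=\{r^{\triangleright}:r\in\mathbf{R}^{\mathrm{o}}\}$. *)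

From Stdlib Require Import List ClassicalEpsilon.
Import ListNotations.
Set Implicit Arguments.

Inductive bform (P : Type) : Type :=
| BAtom : P -> bform P
| BTop : bform P
| BBot : bform P
| BNeg : bform P -> bform P
| BAnd : bform P -> bform P -> bform P
| BOr  : bform P -> bform P -> bform P
| BImp : bform P -> bform P -> bform P.
Arguments BTop {P}. Arguments BBot {P}.

Fixpoint beval (P : Type) (v : P -> bool) (f : bform P) : bool :=
  match f with
  | BAtom p => v p
  | BTop => true
  | BBot => false
  | BNeg g => negb (beval v g)
  | BAnd g h => andb (beval v g) (beval v h)
  | BOr g h => orb (beval v g) (beval v h)
  | BImp g h => orb (negb (beval v g)) (beval v h)
  end.

Definition pl_entails (P : Type) (S : bform P -> Prop) (x : bform P) : Prop :=
  forall v : P -> bool, (forall f, S f -> beval v f = true) -> beval v x = true.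

Definition pl_consistent (P : Type) (S : bform P -> Prop) : Prop :=
  exists v : P -> bool, forall f, S f -> beval v f = true.

Inductive mform (P : Type) : Type :=
| MAtom : P -> mform P
| MTop : mform P
| MBot : mform P
| MNeg : mform P -> mform P
| MAnd : mform P -> mform P -> mform P
| MOr  : mform P -> mform P -> mform P
| MImp : mform P -> mform P -> mform P
| MBox : mform P -> mform P.
Arguments MTop {P}. Arguments MBot {P}.

Fixpoint embed (P : Type) (f : bform P) : mform P :=
  match f with
  | BAtom p => MAtom p
  | BTop => MTop
  | BBot => MBot
  | BNeg g => MNeg (embed g)
  | BAnd g h => MAnd (embed g) (embed h)
  | BOr g h => MOr (embed g) (embed h)
  | BImp g h => MImp (embed g) (embed h)
  end.

Fixpoint msat (P W : Type) (R : W -> W -> Prop) (V : W -> P -> bool)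
    (w : W) (f : mform P) : Prop :=
  match f with
  | MAtom p => V w p = true
  | MTop => True
  | MBot => False
  | MNeg g => ~ msat R V w g
  | MAnd g h => msat R V w g /\ msat R V w h
  | MOr g h => msat R V w g \/ msat R V w h
  | MImp g h => msat R V w g -> msat R V w h
  | MBox g => forall u, R w u -> msat R V u g
  end.

Definition equivalence_rel (W : Type) (R : W -> W -> Prop) : Prop :=
  (forall x, R x x) /\ (forall x y, R x y -> R y x) /\
  (forall x y z, R x y -> R y z -> R x z).

Definition s5_entails (P : Type) (S : mform P -> Prop) (x : mform P) : Prop :=
  forall (W : Type) (R : W -> W -> Prop) (V : W -> P -> bool) (w : W),
    equivalence_rel R ->
    (forall f, S f -> msat R V w f) -> msat R V w x.

Record obligation (P : Type) := Oblig { body : bform P; head : bform P }.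

Definition overrides (P : Type) (Gamma : mform P -> Prop)
    (rj ri : obligation P) : Prop :=
  s5_entails (fun f => f = embed (head ri) \/ f = embed (head rj) \/ Gamma f) MBot
  /\ pl_entails (fun f => f = body rj) (body ri)
  /\ ~ pl_entails (fun f => f = body ri) (body rj)
  /\ ~ pl_entails (fun f => f = head ri \/ f = body rj) BBot.

Definition bsat (P W : Type) (val : W -> P -> bool) (w : W) (f : bform P) : Prop :=
  beval (val w) f = true.

Definition Vset (P W : Type) (Gamma : mform P -> Prop) (Ro : list (obligation P))
    (val : W -> P -> bool) (w : W) (r : obligation P) : Prop :=
  In r Ro /\ bsat val w (body r) /\ ~ bsat val w (head r) /\
  (forall rj, In rj Ro -> overrides Gamma rj r -> ~ bsat val w (body rj)).

Record model (P : Type) := Model {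
  world : Type;
  geN : world -> world -> Prop;
  geI : world -> world -> Prop;
  val : world -> P -> bool }.

Definition R_ordered (P : Type) (Gamma : mform P -> Prop) (Ro : list (obligation P))
    (M : model P) : Prop :=
  inhabited (world M) /\
  (forall w1 w2, geN M w1 w2) /\
  (forall w1 w2, geI M w1 w2 <->
     (forall r, Vset Gamma Ro (val M) w1 r -> Vset Gamma Ro (val M) w2 r)).

Definition replete (P : Type) (M : model P) : Prop :=
  forall f : bform P, pl_consistent (fun g => g = f) -> exists w, bsat (val M) w f.

Definition norm (P : Type) (M : model P) (a : bform P) : world M -> Prop :=
  fun w => bsat (val M) w a.

Definition max_geI (P : Type) (M : model P) (X : world M -> Prop) : world M -> Prop :=
  fun w => X w /\ forall u, X u -> geI M u w -> geI M w u.

Definition m_of (P : Type) (H : (bform P * bform P) -> Prop) : bform P -> Prop :=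
  fun f => exists p, H p /\ f = BImp (fst p) (snd p).

Definition out4p (P : Type) (H : (bform P * bform P) -> Prop) (a : bform P)
    : bform P -> Prop :=
  fun x => pl_entails (fun f => f = a \/ m_of H f) x.

Definition maxf (P : Type) (N : (bform P * bform P) -> Prop) (a : bform P)
    (C : bform P -> Prop) : ((bform P * bform P) -> Prop) -> Prop :=
  fun H =>
    (forall p, H p -> N p) /\
    pl_consistent (fun f => out4p H a f \/ C f) /\
    (forall H', (forall p, H p -> H' p) -> (forall p, H' p -> N p) ->
       pl_consistent (fun f => out4p H' a f \/ C f) ->
       forall p, H' p -> H p).

Definition overridesb (P : Type) (Gamma : mform P -> Prop) (rj ri : obligation P) : bool :=
  if excluded_middle_informative (overrides Gamma rj ri) then true else false.

Definition Dset (P : Type) (Gamma : mform P -> Prop) (Ro : list (obligation P))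
    (ri : obligation P) : list (obligation P) :=
  filter (fun rj => overridesb Gamma rj ri) Ro.

Definition bigAnd (P : Type) (l : list (bform P)) : bform P :=
  fold_right (@BAnd P) BTop l.

Definition translate (P : Type) (Gamma : mform P -> Prop) (Ro : list (obligation P))
    (ri : obligation P) : bform P * bform P :=
  match Dset Gamma Ro ri with
  | [] => (body ri, head ri)
  | D => (BAnd (body ri) (bigAnd (map (fun rj => BNeg (body rj)) D)), head ri)
  end.

Definition Ro_tr (P : Type) (Gamma : mform P -> Prop) (Ro : list (obligation P))
    : (bform P * bform P) -> Prop :=
  fun p => exists r, In r Ro /\ p = translate Gamma Ro r.

(** A world w violates the material conditional of the translation r^▷ of
    r ∈ R^o exactly when r ∈ V(w), so ⪰_I compares worlds by the translated
    obligations whose material conditionals they satisfy.  For a ⪰_I-maximal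
    a-world w, let H be the set of translated obligations satisfied at w.  If
    H ⊆ H' with {a} ∪ m(H') consistent, then, R^o being finite, repleteness
    gives a world u satisfying a and m(H'); u satisfies everything w does, so
    u ⪰_I w, maximality gives w ⪰_I u, and w satisfies m(H'), i.e. H' = H. *)

From Pilot Require Import Defs.
From Stdlib Require Import List Bool ClassicalEpsilon.

Set Implicit Arguments.

Lemma beval_bigAnd (P : Type) (v : P -> bool) (l : list (bform P)) :
  beval v (bigAnd l) = true <-> forall f, In f l -> beval v f = true.
Proof.
  induction l as [|g l IH]; simpl.
  - split; [intros _ f []|reflexivity].
  - rewrite andb_true_iff, IH. split.
    + intros [Hg Hl] f [<-|Hf]; auto.
    + intros Hall; split; auto.
Qed.

Lemma pl_consistent_entails (P : Type) (S C : bform P -> Prop) :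
  pl_consistent (fun f => pl_entails S f \/ C f) <->
  pl_consistent (fun f => S f \/ C f).
Proof.
  split; intros [v Hv]; exists v.
  - intros f [Hf|Hf]; apply Hv; [left; intros v' Hv'; auto|right; exact Hf].
  - intros f [Hf|Hf]; [apply Hf|]; auto.
Qed.

(* Witness: the conjunction of the formulas of [l] true under a valuation
   satisfying [S]. *)
Lemma replete_consistent_sublist (P : Type) (M : model P)
    (S : bform P -> Prop) (l : list (bform P)) :
  replete M -> (forall f, S f -> In f l) -> pl_consistent S ->
  exists w, forall f, S f -> bsat (val M) w f.
Proof.
  intros Hrep Hl [v Hv].
  destruct (Hrep (bigAnd (filter (beval v) l))) as [w Hw].
  { exists v; intros g ->. apply beval_bigAnd. intros f Hf.
    apply filter_In in Hf. apply Hf. }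
  exists w. intros f Hf. apply (proj1 (beval_bigAnd _ _) Hw).
  apply filter_In; auto.
Qed.

Definition material (P : Type) (p : bform P * bform P) : bform P :=
  BImp (fst p) (snd p).

Section Translation.

Variables (P : Type) (Gamma : mform P -> Prop) (Ro : list (obligation P)).

Local Notation tr := (translate Gamma Ro).

Lemma In_Dset (r rj : obligation P) :
  In rj (Dset Gamma Ro r) <-> In rj Ro /\ overrides Gamma rj r.
Proof.
  unfold Dset, overridesb. rewrite filter_In.
  destruct excluded_middle_informative; intuition congruence.
Qed.

Lemma beval_translate_body (v : P -> bool) (r : obligation P) :
  beval v (fst (tr r)) = true <->
  beval v (body r) = true /\
  (forall rj, In rj Ro -> overrides Gamma rj r -> beval v (body rj) = false).
Proof.
  assert (Hfst : beval v (fst (tr r)) =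
                 beval v (body r) &&
                 beval v (bigAnd (map (fun rj => BNeg (body rj)) (Dset Gamma Ro r)))).
  { unfold translate. destruct (Dset Gamma Ro r); simpl;
      [rewrite andb_true_r|]; reflexivity. }
  rewrite Hfst, andb_true_iff, beval_bigAnd.
  apply and_iff_compat_l. split.
  - intros Hneg rj Hrj Hov.
    apply negb_true_iff, (Hneg (BNeg (body rj))).
    apply (in_map (fun rj => BNeg (body rj))), In_Dset; auto.
  - intros Hov f Hf. apply in_map_iff in Hf as [rj [<- Hrj]].
    apply In_Dset in Hrj as [Hrj Hovr]. simpl. rewrite (Hov rj Hrj Hovr). reflexivity.
Qed.

Lemma Vset_translate (W : Type) (vl : W -> P -> bool) (w : W) (r : obligation P) :
  In r Ro ->
  Vset Gamma Ro vl w r <-> beval (vl w) (material (tr r)) = false.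
Proof.
  intros Hr.
  assert (Hsnd : snd (tr r) = Defs.head r)
    by (unfold translate; destruct (Dset Gamma Ro r); reflexivity).
  unfold Vset, bsat, material. simpl. rewrite Hsnd.
  rewrite orb_false_iff, negb_false_iff, beval_translate_body.
  setoid_rewrite not_true_iff_false. intuition.
Qed.

Lemma geI_translate (M : model P) (u w : world M) :
  R_ordered Gamma Ro M ->
  geI M u w <->
  (forall r, In r Ro ->
     bsat (val M) w (material (tr r)) -> bsat (val M) u (material (tr r))).
Proof.
  intros [_ [_ HgeI]]. rewrite HgeI. unfold bsat. split.
  - intros Hsub r Hr Hw. apply not_false_iff_true. intros Hu.
    apply (Vset_translate _ _ _ Hr), Hsub, (Vset_translate _ _ _ Hr) in Hu.
    congruence.
  - intros Hsat r Hu. assert (Hr : In r Ro) by apply Hu.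
    apply (Vset_translate _ _ _ Hr) in Hu. apply (Vset_translate _ _ _ Hr).
    apply not_true_iff_false. intros Hw. rewrite (Hsat r Hr Hw) in Hu.
    discriminate.
Qed.

Definition obeyed_at {M : model P} (w : world M) (p : bform P * bform P) : Prop :=
  Ro_tr Gamma Ro p /\ bsat (val M) w (material p).

Lemma obeyed_at_maxf (M : model P) (a : bform P) (w : world M) :
  R_ordered Gamma Ro M -> replete M -> max_geI M (norm M a) w ->
  maxf (Ro_tr Gamma Ro) a (fun f => f = a) (obeyed_at w).
Proof.
  intros Hord Hrep [Hwa Hmax]. split; [intros p Hp; apply Hp|split].
  - apply pl_consistent_entails. exists (val M w).
    intros f [[->|[p [[_ Hp] ->]]]| ->]; assumption.
  - intros H' Hsub HN Hcons p Hp.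
    apply (proj1 (pl_consistent_entails _ _)) in Hcons. cbv beta in Hcons.
    assert (Hfin : forall f, (f = a \/ m_of H' f) \/ f = a ->
                             In f (a :: map (fun r => material (tr r)) Ro)).
    { intros f [[->|[q [Hq ->]]]| ->]; try (left; reflexivity).
      right. destruct (HN q Hq) as [r [Hr ->]].
      apply (in_map (fun r => material (tr r)) _ _ Hr). }
    destruct (replete_consistent_sublist _ Hrep Hfin Hcons) as [u Hu].
    assert (Hsat_u : forall r, H' (tr r) -> bsat (val M) u (material (tr r)))
      by (intros r Hr; apply Hu; left; right; exists (tr r); auto).
    assert (Hgeuw : geI M u w).
    { apply (geI_translate _ _ Hord). intros r Hr Hw.
      apply Hsat_u, Hsub. split; [exists r; auto|exact Hw]. }
    assert (Hgewu : geI M w u) by (apply Hmax; [apply Hu; right|]; auto).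
    destruct (HN p Hp) as [r [Hr ->]]. split; [exists r; auto|].
    apply (proj1 (geI_translate _ _ Hord) Hgewu r Hr), Hsat_u; assumption.
Qed.

End Translation.

Theorem theorem2 (P : Type) (Gamma : mform P -> Prop) (Ro : list (obligation P))
    (M : model P) :
  R_ordered Gamma Ro M -> replete M ->
  forall (a : bform P) (w : world M),
    max_geI M (norm M a) w ->
    bsat (val M) w a /\
    exists H, maxf (Ro_tr Gamma Ro) a (fun f => f = a) H /\
              (forall p, H p -> bsat (val M) w (BImp (fst p) (snd p))).
Proof.
  intros Hord Hrep a w Hw. split; [apply Hw|].
  exists (obeyed_at Gamma Ro w). split.
  - apply obeyed_at_maxf; assumption.
  - intros p [_ Hp]. exact Hp.
Qed.
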